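(* Let $(G,\vec\nu)$ be a signature game on a finite game graph $G$ with vertex set $V$ and maximal absolute integer weight $W$, such that every integer threshold $\nu_i\in\mathbb{Z}$ satisfies $\nu_i\geq -2\cdot W\cdot|V|$. Then player 1 has a winning strategy in $(G,\vec\nu)$ if and only if player 1 has a memoryless (positional) winning strategy in $(G,\vec\nu)$.
   Context: A finite two-player game graph $G=((V,E),(V_1,V_2))$ has a finite directed graph $(V,E)$ whose vertices are partitioned into player-1 vertices $V_1$ and player-2 vertices $V_2$, an initial vertex $v_0$, and a weight function $w:E\to\mathbb{Z}\cup\{-\omega\}$; $W$ is the maximum absolute value of the integer weights. Plays are infinite paths from $v_0$, the owner of the current vertex choosing the next edge. The weight of a finite path is the sum of its edge weights, with the convention $-\omega+z=-\omega$ for $z\in\mathbb{Z}\cup\{-\omega\}$. A signature game $(G,\vec\nu)$ has a threshold vector $\vec\nu=(\nu_1,\dots,\nu_{|V|})$ with $\nu_i\in\mathbb{Z}\cup\{+\infty,-\omega\}$, where $\nu_i$ is associated to vertex $v_i$. Player 1 wins a play $\rho=\rho_0\rho_1\dots$ iff (a) $\rho$ contains no cycle of negative weight and no cycle containing an edge of weight $-\omega$, and (b) for every $j$, if $\rho_j=v_i$ then $w(\rho_0\dots\rho_j)\geq\nu_i$, under the order $-\omega<z<+\infty$ for all $z\in\mathbb{Z}$ (so vertices with threshold $+\infty$ must never be visited). A memoryless strategy chooses the next edge depending only on the current vertex; a winning strategy ensures player 1 wins every consistent play. *)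

From mathcomp Require Import all_boot all_order all_algebra.
Set Implicit Arguments. Unset Strict Implicit. Unset Printing Implicit Defensive.
Import Order.TTheory GRing.Theory Num.Theory.

Inductive weight := WInt of int | WNegOmega.

Inductive thr := TInt of int | TPInf | TNegOmega.

Definition wadd (a b : weight) : weight :=
  match a, b with
  | WInt x, WInt y => WInt (x + y)%R
  | _, _ => WNegOmega
  end.

Definition wge (a : weight) (t : thr) : Prop :=
  match t with
  | TPInf => False
  | TNegOmega => True
  | TInt z => match a with WInt x => (z <= x)%R | WNegOmega => False end
  end.

Section Game.
Variables (V : finType) (E : rel V) (owner1 : pred V) (v0 : V)
          (w : V -> V -> weight) (nu : V -> thr).

Definition wabs (a : weight) : nat := if a is WInt z then `|z|%N else 0%N.
Definition maxW : nat := (\max_(p : V * V | E p.1 p.2) wabs (w p.1 p.2))%N.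

Definition is_play (rho : nat -> V) : Prop :=
  rho 0%N = v0 /\ forall i, E (rho i) (rho i.+1).

Definition seg_weight (rho : nat -> V) (i j : nat) : weight :=
  foldr (fun k acc => wadd (w (rho k) (rho k.+1)) acc) (WInt 0) (iota i (j - i)).

(* general (history-dependent) strategies of player 1: given the history
   rho_0 ... rho_{j-1} and the current vertex rho_j, choose the next vertex *)
Definition strategy1 := seq V -> V -> V.

Definition is_strategy1 (s : strategy1) : Prop :=
  forall h v, owner1 v -> E v (s h v).

Definition consistent (s : strategy1) (rho : nat -> V) : Prop :=
  forall j, owner1 (rho j) -> rho j.+1 = s [seq rho k | k <- iota 0 j] (rho j).

Definition win1 (rho : nat -> V) : Prop :=
  (* (a) no cycle of negative weight, no cycle containing a -omega edge *)
  (forall i j, (i < j)%N -> rho i = rho j ->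
     exists z, seg_weight rho i j = WInt z /\ (0 <= z)%R) /\
  (forall j, wge (seg_weight rho 0 j) (nu (rho j))).

Definition winning1 (s : strategy1) : Prop :=
  forall rho, is_play rho -> consistent s rho -> win1 rho.

Definition memoryless_winning : Prop :=
  exists f : V -> V, (forall v, owner1 v -> E v (f v)) /\
                     winning1 (fun _ v => f v).

Definition has_winning_strategy : Prop :=
  exists s : strategy1, is_strategy1 s /\ winning1 s.

End Game.

From mathcomp Require Import all_boot all_order all_algebra zify.
From Stdlib Require Import Classical ClassicalEpsilon.
Set Implicit Arguments. Unset Strict Implicit. Unset Printing Implicit Defensive.
Import Order.TTheory GRing.Theory Num.Theory.
Local Open Scope ring_scope.

(* Encode an edge weight -omega by the integer -penalty, penalty = 3W|V| + W + 1,
   and call a configuration (v, c) energy-ok when c >= -|V| * penalty and c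
   respects the threshold of v.
   1. A play won by player 1 is energy-ok at every step: its loops are
      non-negative and -omega-free, so cutting them out shows that every prefix
      weighs at least -penalty per distinct vertex (win1_energy).
   2. Conversely, if every play of a positional strategy f stays energy-ok, then
      f is winning: pumping a negative loop would break the lower bound, and loop
      removal reduces a -omega edge on a loop, or before an integer threshold, to
      a short segment weighing less than 0 and than -2W|V| (energy_win1).
   3. Given a winning strategy s, the configurations reachable under s form an
      invariant; playing at each player-1 vertex the move s makes from the
      reachable configuration of least credit gives a positional strategy whose
      plays stay above reachable configurations, hence energy-ok
      (winning_to_positional).
   The theorem follows from 3 and 2; the converse direction is immediate. *)

Section Encoding.
Variables (V : finType) (E : rel V) (w : V -> V -> weight).

(* An edge of weight -omega is encoded by the integer -penalty; the penalty
   exceeds the weight of any -omega-free simple path plus the threshold bound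
   2*W*|V|, so a short path through such an edge is always "too expensive". *)
Definition penalty : int := ((3 * maxW E w * #|V| + maxW E w).+1)%N%:Z.

(* The credit bound: no play of a winning strategy ever drops below it. *)
Definition credit_bound : int := #|V|%:Z * penalty.

Definition iw (a : weight) : int := if a is WInt z then z else - penalty.

Fixpoint enc (rho : nat -> V) (i n : nat) : int :=
  if n is n'.+1 then iw (w (rho i) (rho i.+1)) + enc rho i.+1 n' else 0.

Fixpoint segn (rho : nat -> V) (i n : nat) : weight :=
  if n is n'.+1 then wadd (w (rho i) (rho i.+1)) (segn rho i.+1 n') else WInt 0.

Lemma seg_weightE rho i j : seg_weight w rho i j = segn rho i (j - i).
Proof.
rewrite /seg_weight; move: (j - i)%N => n.
by elim: n i => [|n IH] i //=; rewrite IH.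
Qed.

Definition omega_edge (rho : nat -> V) (k : nat) : Prop :=
  w (rho k) (rho k.+1) = WNegOmega.

Definition has_omega (rho : nat -> V) (i n : nat) : Prop :=
  exists k, (i <= k < i + n)%N /\ omega_edge rho k.

Lemma segn_omega rho i n : has_omega rho i n -> segn rho i n = WNegOmega.
Proof.
elim: n i => [|n IH] i [k [Hk Hom]] /=; first lia.
have [Hki|Hki] := eqVneq k i; first by subst k; rewrite Hom.
rewrite IH; first by case: (w _ _).
by exists k; split => //; lia.
Qed.

Lemma segn_int rho i n : ~ has_omega rho i n -> segn rho i n = WInt (enc rho i n).
Proof.
elim: n i => [|n IH] i Hno //=.
rewrite IH => [|[k [Hk Hom]]]; last by apply: Hno; exists k; split => //; lia.
case Hw: (w _ _) => [z|] //; exfalso; apply: Hno.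
by exists i; split => //; lia.
Qed.

Lemma enc_split rho i k m : enc rho i (k + m) = enc rho i k + enc rho (i + k) m.
Proof.
elim: k i => [|k IH] i /=; first by rewrite add0r addn0.
by rewrite IH addrA addnS.
Qed.

Lemma enc_snoc rho j : enc rho 0 j.+1 = enc rho 0 j + iw (w (rho j) (rho j.+1)).
Proof. by rewrite -addn1 enc_split /= add0n addr0 addn1. Qed.

Lemma enc_ext rho1 rho2 i1 i2 n :
  (forall t, (t <= n)%N -> rho1 (i1 + t)%N = rho2 (i2 + t)%N) ->
  enc rho1 i1 n = enc rho2 i2 n.
Proof.
elim: n i1 i2 => [|n IH] i1 i2 H //=.
have := H 0%N isT; have := H 1%N isT; rewrite !addn0 !addn1 => -> ->.
by congr (_ + _); apply: IH => t Ht; rewrite !addSnnS; apply: H.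
Qed.

Definition edges (rho : nat -> V) : Prop := forall k, E (rho k) (rho k.+1).

Lemma wabs_le_maxW a b : E a b -> (wabs (w a b) <= maxW E w)%N.
Proof.
exact: (@leq_bigmax_cond _ (fun p : V * V => E p.1 p.2) (fun p => wabs (w p.1 p.2)) (a, b)).
Qed.

Lemma iw_le a b : E a b -> iw (w a b) <= (maxW E w)%:Z.
Proof.
move=> /wabs_le_maxW; rewrite /iw /penalty.
case: (w a b) => [z|] /= Hz; last lia.
by apply: le_trans (lez_abs z) _; rewrite lez_nat.
Qed.

Lemma iw_ge a b : E a b -> - penalty <= iw (w a b).
Proof.
move=> /wabs_le_maxW; rewrite /iw /penalty.
case: (w a b) => [z|] /= Hz //.
have : - z <= (`|z|%N)%:Z by rewrite -abszN lez_abs.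
lia.
Qed.

Lemma enc_le rho i n : edges rho -> enc rho i n <= n%:Z * (maxW E w)%:Z.
Proof.
move=> He; elim: n i => [|n IH] i /=; first by rewrite mul0r.
have := iw_le (He i); have := IH i.+1; lia.
Qed.

Lemma enc_omega_le rho i n : edges rho -> has_omega rho i n ->
  enc rho i n <= n%:Z * (maxW E w)%:Z - penalty.
Proof.
move=> He; elim: n i => [|n IH] i [k [Hk Hom]] /=; first lia.
have := iw_le (He i).
have [Hki|Hki] := eqVneq k i.
  subst k; rewrite Hom /=; have := enc_le i.+1 n He; lia.
have Hk' : (i.+1 <= k < i.+1 + n)%N by lia.
have := IH i.+1 (ex_intro _ k (conj Hk' Hom)); lia.
Qed.

Lemma repeat_or_short (rho : nat -> V) i n :
  (exists a b, (i <= a < b)%N /\ (b < i + n)%N /\ rho a = rho b) \/ (n <= #|V|)%N.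
Proof.
apply: NNPP => /not_or_and [Hno Hlong]; apply: Hlong.
have Hu : uniq [seq rho (i + t)%N | t <- iota 0 n].
  rewrite map_inj_in_uniq ?iota_uniq // => t1 t2.
  rewrite !mem_iota /= !add0n => H1 H2 Heq; apply/eqP.
  case: (ltngtP t1 t2) => // H; exfalso; apply: Hno.
    by exists (i + t1)%N, (i + t2)%N; split; [lia | split; [lia | done]].
  by exists (i + t2)%N, (i + t1)%N; split; [lia | split; [lia | done]].
by rewrite -(size_iota 0 n) -(size_map (fun t => rho (i + t)%N)) -(card_uniqP Hu) max_card.
Qed.

Fixpoint visited (rho : nat -> V) (i n : nat) : {set V} :=
  if n is n'.+1 then rho i |: visited rho i.+1 n' else set0.

Lemma visited_mem rho i n x :
  x \in visited rho i n -> exists t, (t < n)%N /\ rho (i + t)%N = x.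
Proof.
elim: n i => [|n IH] i /=; first by rewrite in_set0.
rewrite in_setU1 => /orP [/eqP ->|/IH [t [Ht <-]]]; first by exists 0%N; rewrite addn0.
by exists t.+1; rewrite addSnnS.
Qed.

Lemma visited_in rho i n t : (t < n)%N -> rho (i + t)%N \in visited rho i n.
Proof.
elim: n i t => [|n IH] i [|t] //= Ht; rewrite in_setU1 ?addn0 ?eqxx //.
by rewrite -addSnnS IH ?orbT.
Qed.

(* Greedy lower bound: if no segment that returns to its starting vertex has
   negative encoded weight, then cut every such loop out of a segment; what
   remains visits each vertex once, and each step costs at most the penalty. *)
Lemma enc_ge_visited rho : edges rho ->
  (forall i k, (0 < k)%N -> rho i = rho (i + k)%N -> 0 <= enc rho i k) ->
  forall n i, - (#|visited rho i n|%:Z * penalty) <= enc rho i n.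
Proof.
move=> He Hloop; elim/ltn_ind => n IH i.
case: n IH => [|n] IH; first by rewrite /= cards0 mul0r oppr0.
case: (classic (exists k, (0 < k <= n.+1)%N /\ rho (i + k)%N = rho i)) =>
    [[k [Hk Hki]]|Hfresh].
  have -> : n.+1 = (k + (n.+1 - k))%N by lia.
  rewrite enc_split.
  have Hfirst := Hloop i k ltac:(lia) (esym Hki).
  have Hrest := IH (n.+1 - k)%N ltac:(lia) (i + k)%N.
  have Hsub : (#|visited rho (i + k) (n.+1 - k)| <= #|visited rho i (k + (n.+1 - k))|)%N.
    apply/subset_leq_card/subsetP => x /visited_mem [t [Ht <-]].
    by rewrite -addnA; apply: visited_in; lia.
  have : #|visited rho (i + k) (n.+1 - k)|%:Z * penalty <=
         #|visited rho i (k + (n.+1 - k))|%:Z * penalty.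
    by rewrite ler_wpM2r ?lez_nat.
  lia.
have Hnew : rho i \notin visited rho i.+1 n.
  apply/negP => /visited_mem [t [Ht Heq]]; apply: Hfresh.
  by exists t.+1; split; [lia | rewrite addnS].
rewrite /= cardsU1 Hnew /=.
have := IH n (ltnSn n) i.+1; have := iw_ge (He i); lia.
Qed.

Lemma enc_ge_credit rho : edges rho ->
  (forall i k, (0 < k)%N -> rho i = rho (i + k)%N -> 0 <= enc rho i k) ->
  forall n i, - credit_bound <= enc rho i n.
Proof.
move=> He Hloop n i; apply: le_trans (enc_ge_visited He Hloop n i).
by rewrite lerN2 /credit_bound mulrC [X in _ <= X]mulrC ler_wpM2l ?lez_nat ?max_card.
Qed.

End Encoding.

Section Energy.
Variables (V : finType) (E : rel V) (w : V -> V -> weight) (nu : V -> thr).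
Local Notation enc := (enc E w).

Definition thr_ok (t : thr) (c : int) : Prop :=
  match t with TInt z => z <= c | TPInf => False | TNegOmega => True end.

Definition energy_ok (v : V) (c : int) : Prop :=
  - credit_bound E w <= c /\ thr_ok (nu v) c.

Lemma energy_ok_mono v c c' : c <= c' -> energy_ok v c -> energy_ok v c'.
Proof. by move=> Hc [H1 H2]; split; [lia | case: (nu v) H2 => //= z; lia]. Qed.

Lemma segn_intE rho i n z : segn w rho i n = WInt z -> enc rho i n = z.
Proof.
case: (classic (has_omega w rho i n)) => [/segn_omega -> //|/(segn_int E) ->].
by case.
Qed.

Lemma wge_thr_ok rho j t : wge (segn w rho 0 j) t -> thr_ok t (enc rho 0 j).
Proof.
case: (classic (has_omega w rho 0 j)) => [/segn_omega|/(segn_int E)] ->.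
  by case: t.
by case: t.
Qed.

Lemma win1_energy rho : edges E rho -> win1 w nu rho ->
  forall j, energy_ok (rho j) (enc rho 0 j).
Proof.
move=> He [Hcyc Hthr] j; split; last by have := Hthr j; rewrite seg_weightE subn0; apply: wge_thr_ok.
apply: enc_ge_credit => // i k Hk Hik.
have [z [Hz Hz0]] := Hcyc i (i + k)%N ltac:(lia) Hik.
by move: Hz; rewrite seg_weightE addKn => /segn_intE ->.
Qed.

End Energy.

(* Loop removal and loop pumping: two ways of editing a play that keeps every
   step an original step, hence keeps it a play of a positional strategy. *)
Section Positional.
Variables (V : finType) (E : rel V) (owner1 : pred V) (v0 : V) (f : V -> V).

Definition pplay (rho : nat -> V) : Prop :=
  is_play E v0 rho /\ forall j, owner1 (rho j) -> rho j.+1 = f (rho j).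

Lemma pplay_edges rho : pplay rho -> edges E rho.
Proof. by case=> [[_ H] _]. Qed.

Lemma pplay_steps rho rho' : pplay rho -> rho' 0%N = rho 0%N ->
  (forall k, exists m, rho' k = rho m /\ rho' k.+1 = rho m.+1) -> pplay rho'.
Proof.
move=> [[H0 He] Hc] H0' Hstep; split; [split|] => [|k|k]; first by rewrite H0'.
  by have [m [-> ->]] := Hstep k.
by have [m [-> ->]] := Hstep k; apply: Hc.
Qed.

Definition remloop (rho : nat -> V) (a b : nat) : nat -> V :=
  fun t => if (t <= a)%N then rho t else rho (t + (b - a))%N.

Lemma remloop_high rho a b t : (a < b)%N -> rho a = rho b -> (a <= t)%N ->
  remloop rho a b t = rho (t + (b - a))%N.
Proof.
move=> Hab Heq Hat; rewrite /remloop; case: ifP => // Hta.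
have -> : t = a by lia.
by rewrite subnKC ?(ltnW Hab).
Qed.

Lemma remloop_play rho a b : pplay rho -> (a < b)%N -> rho a = rho b ->
  pplay (remloop rho a b).
Proof.
move=> Hp Hab Heq; apply: (pplay_steps Hp) => // k.
case: (ltnP k a) => Hk.
  by exists k; rewrite /remloop (ltnW Hk) Hk.
by exists (k + (b - a))%N; rewrite !remloop_high ?addSn //; lia.
Qed.

Definition pump (rho : nat -> V) (i L : nat) : nat -> V :=
  fun k => if (k < i)%N then rho k else rho (i + (k - i) %% L)%N.

Lemma pump_play rho i L : pplay rho -> (0 < L)%N -> rho i = rho (i + L)%N ->
  pplay (pump rho i L).
Proof.
move=> Hp HL Heq; apply: (pplay_steps Hp) => [|k].
  by rewrite /pump; case: (i) => //; rewrite sub0n mod0n.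
case: (ltnP k i) => Hki.
  exists k; rewrite /pump Hki; case: ltnP => // Hk.
  have -> : i = k.+1 by lia.
  by rewrite subnn mod0n addn0.
exists (i + (k - i) %% L)%N; rewrite /pump ltnNge Hki ltnNge (leqW Hki) /=; split => //.
have -> : ((k.+1 - i) %% L = ((k - i) %% L).+1 %% L)%N.
  by rewrite subSn // -addn1 -modnDml addn1.
have := ltn_pmod (k - i) HL; case: (ltngtP ((k - i) %% L).+1 L) => // [Hlt|Heqm] _.
  by rewrite modn_small // addnS.
by rewrite Heqm modnn addn0 Heq -addnS Heqm.
Qed.

Lemma pump_enc (w : V -> V -> weight) rho i L : (0 < L)%N -> rho i = rho (i + L)%N ->
  forall m, enc E w (pump rho i L) 0 (i + m * L) = enc E w rho 0 i + m%:Z * enc E w rho i L.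
Proof.
move=> HL Heq; elim => [|m IH].
  rewrite mul0n addn0 mul0r addr0; apply: enc_ext => t Ht; rewrite /pump add0n.
  case: ltnP => // Hti; have -> : t = i by lia.
  by rewrite subnn mod0n addn0.
have -> : (i + m.+1 * L = (i + m * L) + L)%N by rewrite mulSn; lia.
rewrite enc_split IH -addrA intS mulrDl mul1r [_ + enc _ _ _ _ _]addrC.
congr (_ + (_ + _)); apply: enc_ext => t Ht; rewrite /pump add0n.
have -> : (i + m * L + t < i)%N = false by lia.
have -> : (i + m * L + t - i = m * L + t)%N by lia.
case: (ltngtP t L) => Ht'; [|lia|].
  by rewrite addnC modnMDl modn_small // addnC.
by rewrite Ht' -mulSnr modnMl addn0.
Qed.

End Positional.

(* A positional strategy whose plays all satisfy the energy condition is
   winning: pumping shows its loops are non-negative, and loop removal shows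
   that no -omega edge can occur on a loop or before an integer threshold. *)
Section EnergyWinning.
Variables (V : finType) (E : rel V) (owner1 : pred V) (v0 : V)
          (w : V -> V -> weight) (nu : V -> thr) (f : V -> V).
Local Notation enc := (enc E w).
Local Notation pplay := (pplay E owner1 v0 f).

Definition energy_winning : Prop :=
  forall rho, pplay rho -> forall j, energy_ok E w nu (rho j) (enc rho 0 j).

Hypothesis Hwin : energy_winning.

Lemma omega_split rho i n a b : (i <= a < b)%N -> (b <= i + n)%N -> rho a = rho b ->
  has_omega w rho i n ->
  has_omega w rho a (b - a) \/ has_omega w (remloop rho a b) i (n - (b - a)).
Proof.
move=> Hab Hb Heq [k [Hk Hom]].
case: (ltnP k a) => Hka; [right | case: (ltnP k b) => Hkb; [left | right]].
- exists k; split; first lia.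
  by rewrite /omega_edge /remloop ltnW // Hka.
- by exists k; split; first lia.
- exists (k - (b - a))%N; split; first lia.
  rewrite /omega_edge !remloop_high //; try lia.
  by rewrite -subSn ?subnK //; lia.
Qed.

(* No loop of a play of f has negative encoded weight: pumping it would
   drive the encoded weight below -credit_bound. *)
Lemma loop_enc_nonneg rho i L : pplay rho -> (0 < L)%N ->
  rho i = rho (i + L)%N -> 0 <= enc rho i L.
Proof.
move=> Hp HL Heq; rewrite leNgt; apply/negP => Hneg.
set m := (absz (enc rho 0 i + credit_bound E w)).+1.
have [Hlow _] := Hwin (pump_play Hp HL Heq) (i + m * L)%N.
move: Hlow; rewrite pump_enc //.
have : m%:Z * enc rho i L <= - m%:Z by rewrite -mulrN1 ler_pM2l ?ltz_nat //; lia.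
have : enc rho 0 i + credit_bound E w <= m%:Z.
  by apply: le_trans (lez_abs _) _; rewrite lez_nat.
lia.
Qed.

(* No loop of a play of f uses a -omega edge: a simple such loop would have
   encoded weight below zero, and longer loops split into shorter ones. *)
Lemma loop_no_omega L rho i : pplay rho -> (0 < L)%N ->
  rho i = rho (i + L)%N -> ~ has_omega w rho i L.
Proof.
elim/ltn_ind: L rho i => L IH rho i Hp HL Hloop Hom.
case: (repeat_or_short rho i L) => [[a [b [Hab [Hb Heq]]]] | Hshort].
  case: (omega_split Hab (ltnW Hb) Heq Hom) => Hom'.
    by apply: (IH (b - a)%N _ rho a Hp _ _ Hom'); [lia | lia | rewrite subnKC //; lia].
  have Hab' : (a < b)%N by lia.
  apply: (IH (L - (b - a))%N _ _ i (remloop_play Hp Hab' Heq) _ _ Hom'); [lia | lia |].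
  rewrite /remloop ifT ?ifF; try lia.
  by rewrite Hloop; congr rho; lia.
have := loop_enc_nonneg Hp HL Hloop.
have := enc_omega_le (pplay_edges Hp) Hom.
have : L%:Z * (maxW E w)%:Z <= #|V|%:Z * (maxW E w)%:Z by rewrite ler_wpM2r // lez_nat.
rewrite /penalty; lia.
Qed.

Hypothesis Hnu : forall v z, nu v = TInt z -> - ((2 * maxW E w * #|V|)%N)%:Z <= z.

(* No -omega edge occurs before a vertex with an integer threshold: on a
   loop-free prefix it would push the weight below -2*W*|V|. *)
Lemma prefix_no_omega j rho z : pplay rho -> nu (rho j) = TInt z ->
  ~ has_omega w rho 0 j.
Proof.
elim/ltn_ind: j rho => j IH rho Hp Hz Hom.
case: (repeat_or_short rho 0 j.+1) => [[a [b [Hab [Hb Heq]]]] | Hshort].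
  have Hbj : (b <= 0 + j)%N by lia.
  case: (omega_split Hab Hbj Heq Hom) => Hom'.
    by apply: (loop_no_omega Hp _ _ Hom'); [lia | rewrite subnKC //; lia].
  have Hab' : (a < b)%N by lia.
  apply: (IH (j - (b - a))%N _ _ (remloop_play Hp Hab' Heq) _ Hom'); first lia.
  by rewrite remloop_high ?subnK //; lia.
have [_] := Hwin Hp j; rewrite Hz /= => Hthr.
have := Hnu Hz; have := enc_omega_le (pplay_edges Hp) Hom.
have : j%:Z * (maxW E w)%:Z <= #|V|%:Z * (maxW E w)%:Z by rewrite ler_wpM2r // lez_nat; lia.
rewrite /penalty; lia.
Qed.

Lemma energy_win1 rho : pplay rho -> win1 w nu rho.
Proof.
move=> Hp; split => [i j Hij Heq | j]; rewrite seg_weightE.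
  have Hloop : rho i = rho (i + (j - i))%N by rewrite subnKC // ltnW.
  rewrite (segn_int E); last by apply: loop_no_omega Hp _ Hloop; lia.
  by eexists; split; [reflexivity | apply: loop_enc_nonneg Hp _ Hloop; lia].
rewrite subn0; have [_] := Hwin Hp j.
case Ht: (nu (rho j)) => [z| |] //= Hz.
by rewrite (segn_int E) //; apply: prefix_no_omega Hp Ht.
Qed.

End EnergyWinning.

Lemma int_min_exists (P : int -> Prop) (B : int) : (exists c, P c) ->
  (forall c, P c -> B <= c) -> exists c, P c /\ forall c', P c' -> c <= c'.
Proof.
move=> [c0 Hc0] HB; apply: NNPP => Hnomin.
have Hup : forall n : nat, forall c, P c -> B + n%:Z <= c.
  elim => [|n IH] c Hc; first by rewrite addr0; apply: HB.
  have := IH c Hc; rewrite le_eqVlt => /orP [/eqP Hceq|]; last lia.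
  by exfalso; apply: Hnomin; exists c; split => // c' Hc'; rewrite -Hceq; apply: IH.
have := Hup (absz (c0 - B)).+1 c0 Hc0.
have : c0 - B <= (absz (c0 - B))%:Z by apply: lez_abs.
lia.
Qed.

Section Forward.
Variables (V : finType) (E : rel V) (owner1 : pred V) (v0 : V)
          (w : V -> V -> weight) (nu : V -> thr).
Hypothesis Hsucc : forall v : V, exists u : V, E v u.
Local Notation enc := (enc E w).

Definition succv (v : V) : V := if [pick u | E v u] is Some u then u else v.

Lemma succv_E v : E v (succv v).
Proof.
have [u Hu] := Hsucc v; rewrite /succv; case: pickP => [u' //|Hnone].
by have := Hnone u; rewrite Hu.
Qed.

Definition consistent_prefix (s : strategy1 V) (p : nat -> V) (n : nat) : Prop :=
  [/\ p 0%N = v0, forall k, (k < n)%N -> E (p k) (p k.+1)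
    & forall k, (k < n)%N -> owner1 (p k) -> p k.+1 = s [seq p t | t <- iota 0 k] (p k)].

Section Extension.
Variables (s : strategy1 V) (p : nat -> V) (n : nat).

Definition ext_step (h : seq V) (k : nat) : V :=
  if (k < n)%N then p k.+1
  else let v := nth (p 0%N) h k in if owner1 v then s (take k h) v else succv v.

Fixpoint ext_hist (k : nat) : seq V :=
  if k is k'.+1 then rcons (ext_hist k') (ext_step (ext_hist k') k') else [:: p 0%N].

Definition ext_play (t : nat) : V := nth (p 0%N) (ext_hist t) t.

Lemma size_ext_hist k : size (ext_hist k) = k.+1.
Proof. by elim: k => //= k IH; rewrite size_rcons IH. Qed.

Lemma ext_play_succ k : ext_play k.+1 = ext_step (ext_hist k) k.
Proof. by rewrite /ext_play /= nth_rcons size_ext_hist ltnn eqxx. Qed.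

Lemma ext_histE k : ext_hist k = [seq ext_play t | t <- iota 0 k.+1].
Proof.
elim: k => [|k IH] //.
have -> : ext_hist k.+1 = rcons (ext_hist k) (ext_play k.+1) by rewrite ext_play_succ.
by rewrite IH -[k.+2]addn1 iotaD map_cat cats1.
Qed.

Lemma ext_play_prefix k : (k <= n)%N -> ext_play k = p k.
Proof. by case: k => [|k] Hk //; rewrite ext_play_succ /ext_step Hk. Qed.

Lemma ext_play_next k : (n <= k)%N -> ext_play k.+1 =
  if owner1 (ext_play k) then s [seq ext_play t | t <- iota 0 k] (ext_play k)
  else succv (ext_play k).
Proof.
move=> Hk; rewrite ext_play_succ /ext_step ltnNge Hk /= ext_histE.
rewrite (nth_map 0%N) ?size_iota // nth_iota // add0n.
by rewrite -map_take take_iota (minn_idPl (leqnSn k)).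
Qed.

End Extension.

Lemma extension s p n : is_strategy1 E owner1 s -> consistent_prefix s p n ->
  exists rho, [/\ is_play E v0 rho, consistent owner1 s rho
                & forall k, (k <= n)%N -> rho k = p k].
Proof.
move=> Hs [H0 HE Hc]; exists (ext_play s p n); split; first split.
- by rewrite ext_play_prefix.
- move=> k; case: (ltnP k n) => Hk.
    by rewrite !ext_play_prefix ?(ltnW Hk) //; apply: HE.
  by rewrite ext_play_next //; case: ifP => Ho; [apply: Hs | apply: succv_E].
- move=> k Ho; case: (ltnP k n) => Hk; last by rewrite ext_play_next ?Ho.
  rewrite !ext_play_prefix ?(ltnW Hk) // in Ho *; rewrite Hc //.
  congr (s _ _); apply/eq_in_map => t; rewrite mem_iota add0n => /andP [_ Ht].
  by rewrite ext_play_prefix //; lia.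
- exact: ext_play_prefix.
Qed.

Definition snoc (p : nat -> V) (n : nat) (u : V) : nat -> V :=
  fun k => if (k <= n)%N then p k else u.

Lemma snoc_prefix s p n u : consistent_prefix s p n -> E (p n) u ->
  (owner1 (p n) -> u = s [seq p t | t <- iota 0 n] (p n)) ->
  consistent_prefix s (snoc p n u) n.+1.
Proof.
rewrite /snoc => -[H0 HE Hc] Hu Hsu; split => [|k|k] //; rewrite ltnS => Hk.
  have [Hkn|Hkn] := ltnP k n; rewrite Hk; first exact: HE.
  have -> : k = n by lia.
  exact: Hu.
have Hmap : [seq (if (t <= n)%N then p t else u) | t <- iota 0 k] = [seq p t | t <- iota 0 k].
  by apply/eq_in_map => t; rewrite mem_iota add0n => /andP [_ Ht]; rewrite ifT //; lia.
rewrite Hk Hmap; have [Hkn|Hkn] := ltnP k n; first exact: Hc.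
have -> : k = n by lia.
exact: Hsu.
Qed.

Lemma enc_snoc_prefix p n u : enc (snoc p n u) 0 n.+1 = enc p 0 n + iw E w (w (p n) u).
Proof.
rewrite enc_snoc /snoc leqnn ltnn; congr (_ + _).
by apply: enc_ext => t Ht; rewrite !add0n Ht.
Qed.

Definition reachable (s : strategy1 V) (v : V) (c : int) : Prop :=
  exists p n, [/\ consistent_prefix s p n, p n = v & enc p 0 n = c].

Lemma reachable_ok s : is_strategy1 E owner1 s -> winning1 E owner1 v0 w nu s ->
  forall v c, reachable s v c -> energy_ok E w nu v c.
Proof.
move=> Hs Hwin v c [p [n [Hp <- <-]]].
have [rho [Hplay Hcons Hpre]] := extension Hs Hp.
have := win1_energy (proj2 Hplay) (Hwin rho Hplay Hcons) n.
rewrite Hpre //; congr energy_ok; apply: enc_ext => t Ht; rewrite !add0n Hpre //.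
Qed.

Lemma reachable_player1 s : is_strategy1 E owner1 s -> forall v c,
  reachable s v c -> owner1 v -> exists u, E v u /\ reachable s u (c + iw E w (w v u)).
Proof.
move=> Hs v c [p [n [Hp <- <-]]] Ho.
pose u := s [seq p t | t <- iota 0 n] (p n).
have Hu : E (p n) u by apply: Hs.
exists u; split => //; exists (snoc p n u), n.+1.
by split; [apply: snoc_prefix | rewrite /snoc ltnn | rewrite enc_snoc_prefix].
Qed.

Lemma reachable_player2 s v c : reachable s v c -> ~~ owner1 v ->
  forall u, E v u -> reachable s u (c + iw E w (w v u)).
Proof.
move=> [p [n [Hp <- <-]]] Ho u Hu; exists (snoc p n u), n.+1.
split; [apply: snoc_prefix => // Ho' | rewrite /snoc ltnn | rewrite enc_snoc_prefix] => //.
by rewrite Ho' in Ho.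
Qed.

Definition covered (Inv : V -> int -> Prop) (v : V) (c : int) : Prop :=
  exists2 c', c' <= c & Inv v c'.

Section Invariant.
Variable Inv : V -> int -> Prop.
Hypothesis Inv_ok : forall v c, Inv v c -> energy_ok E w nu v c.
Hypothesis Inv_player1 : forall v c, Inv v c -> owner1 v ->
  exists u, E v u /\ Inv u (c + iw E w (w v u)).
Hypothesis Inv_player2 : forall v c, Inv v c -> ~~ owner1 v ->
  forall u, E v u -> Inv u (c + iw E w (w v u)).

(* At a player-1 vertex, the move prescribed for the least credit in the
   invariant works for every covered credit: this makes memory unnecessary. *)
Lemma least_credit_move v : exists u, E v u /\
  (owner1 v -> forall c, covered Inv v c -> covered Inv u (c + iw E w (w v u))).
Proof.
have [u0 Hu0] := Hsucc v.
case: (boolP (owner1 v)) => Ho; last by exists u0; split => //; rewrite (negbTE Ho).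
case: (classic (exists c, Inv v c)) => [Hin|Hnone]; last first.
  by exists u0; split => // _ c [c' _ Hc']; exfalso; apply: Hnone; exists c'.
have [cmin [Hcmin Hleast]] := int_min_exists Hin (fun c Hc => proj1 (Inv_ok Hc)).
have [u [Hvu Hu]] := Inv_player1 Hcmin Ho.
exists u; split => // _ c [c' Hc' Hinv]; exists (cmin + iw E w (w v u)) => //.
by have := Hleast c' Hinv; lia.
Qed.

Lemma positional_from_invariant : Inv v0 0 ->
  exists f, (forall v, owner1 v -> E v (f v)) /\ energy_winning E owner1 v0 w nu f.
Proof.
move=> Hinit.
have [f Hf] : exists f : V -> V, forall v, E v (f v) /\
    (owner1 v -> forall c, covered Inv v c -> covered Inv (f v) (c + iw E w (w v (f v)))).
  exists (fun v => proj1_sig (constructive_indefinite_description _ (least_credit_move v))).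
  by move=> v; exact: proj2_sig (constructive_indefinite_description _ (least_credit_move v)).
exists f; split => [v _|rho [[H0 He] Hc]]; first by case: (Hf v).
have Hcov : forall j, covered Inv (rho j) (enc rho 0 j).
  elim => [|j IH]; first by exists 0; rewrite ?H0.
  rewrite enc_snoc; case: (boolP (owner1 (rho j))) => Ho.
    by rewrite (Hc j Ho); apply: (proj2 (Hf (rho j))).
  case: IH => c' Hc' Hinv; exists (c' + iw E w (w (rho j) (rho j.+1))); first lia.
  exact: Inv_player2.
by move=> j; case: (Hcov j) => c' Hc' Hinv; apply: energy_ok_mono Hc' (Inv_ok Hinv).
Qed.

End Invariant.

(* The configurations reachable under a winning strategy form an invariant;
   the least-credit strategy it yields is positional, and energy winning. *)
Lemma winning_to_positional :
  (forall v z, nu v = TInt z -> - ((2 * maxW E w * #|V|)%N)%:Z <= z) ->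
  has_winning_strategy E owner1 v0 w nu -> memoryless_winning E owner1 v0 w nu.
Proof.
move=> Hnu [s [Hs Hwin]].
have Hinit : reachable s v0 0 by exists (fun _ => v0), 0%N.
have [f [Hf Hfwin]] := positional_from_invariant (reachable_ok Hs Hwin)
  (reachable_player1 Hs) (@reachable_player2 s) Hinit.
by exists f; split => // rho Hplay Hcons; exact: (energy_win1 Hfwin Hnu (conj Hplay Hcons)).
Qed.

End Forward.

Theorem lemma10 (V : finType) (E : rel V) (owner1 : pred V) (v0 : V)
    (w : V -> V -> weight) (nu : V -> thr)
    (Hsucc : forall v : V, exists u : V, E v u)
    (Hnu : forall (v : V) (z : int), nu v = TInt z ->
             (- ((2 * maxW E w * #|V|)%N)%:Z <= z)%R) :
  has_winning_strategy E owner1 v0 w nu <->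
  memoryless_winning E owner1 v0 w nu.
Proof.
split; first exact: winning_to_positional.
by move=> [f [Hf Hwin]]; exists (fun _ v => f v); split => // h v; apply: Hf.
Qed.
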